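(* Let $\Omega_L=(0,L)\times(0,\infty)$ with coordinates $(x,Y)$. Steady Euler flows $[u^0_e,v^0_e,P^0_e]$ on $\Omega_L$ are smooth solutions of $$u^0_e\partial_x u^0_e+v^0_e\partial_Y u^0_e+\partial_x P^0_e=0,\quad u^0_e\partial_x v^0_e+v^0_e\partial_Y v^0_e+\partial_Y P^0_e=0,\quad \partial_x u^0_e+\partial_Y v^0_e=0\ \text{ in }\Omega_L,$$ with $v^0_e|_{Y=0}=0$ and $v^0_e\to 0$ as $Y\to\infty$. Then there exists a nontrivial (non-shear) set of such Euler flows satisfying: (i) $0<c_0\le u^0_e\le C_0<\infty$ for some constants $c_0,C_0$; (ii) $\|v^0_e/Y\|_{L^\infty}\ll 1$; (iii) $\|Y^k\nabla^m v^0_e\|_{L^\infty}<\infty$ for all $k,m\ge 0$ up to any prescribed (large) order; (iv) $\|Y^k\nabla^m u^0_e\|_{L^\infty}<\infty$ for all $k\ge 0$, $m\ge 1$ up to any prescribed (large) order. Precisely: for every $\eta>0$ and every integer $K\ge 1$ there is $L_0>0$ such that for every $L\in(0,L_0]$ there exists such a flow on $\Omega_L$ with $v^0_e\not\equiv 0$ (so $u^0_e$ genuinely depends on $x$), satisfying (i), $\|v^0_e/Y\|_{L^\infty(\Omega_L)}\le\eta$, $\|Y^k\nabla^m v^0_e\|_{L^\infty}<\infty$ for $0\le k,m\le K$, and $\|Y^k\nabla^m u^0_e\|_{L^\infty}<\infty$ for $0\le k\le K$, $1\le m\le K$.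
   Context: $\nabla^m$ denotes the collection of all partial derivatives of order $m$ in $(x,Y)$. A shear flow is one of the form $(U(Y),0)$; ''nontrivial'' means the flows constructed are not shear flows. *)

From Stdlib Require Import Reals List.
From Coquelicot Require Import Coquelicot.
Open Scope R_scope.

Definition field2 := R -> R -> R.

Definition pd (d : bool) (f : field2) : field2 :=
  if d then fun x Y => Derive (fun t => f t Y) x
       else fun x Y => Derive (fun t => f x t) Y.

(* Iterated partial derivative along a list of directions; a list of
   length m gives one of the partial derivatives of order m (nabla^m). *)
Fixpoint partial (ds : list bool) (f : field2) : field2 :=
  match ds with
  | nil => f
  | d :: ds' => pd d (partial ds' f)
  end.

Definition in_Omega (L x Y : R) : Prop := 0 < x < L /\ 0 < Y.

Definition smooth_on_Omega (L : R) (f : field2) : Prop :=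
  forall (ds : list bool) (x Y : R), in_Omega L x Y ->
    ex_derive (fun t => partial ds f t Y) x /\
    ex_derive (fun t => partial ds f x t) Y /\
    continuous (fun p : R * R => partial ds f (fst p) (snd p)) (x, Y).

Definition steady_Euler_flow (L : R) (u v P : field2) : Prop :=
  smooth_on_Omega L u /\ smooth_on_Omega L v /\ smooth_on_Omega L P /\
  (forall x Y, in_Omega L x Y ->
     u x Y * pd true u x Y + v x Y * pd false u x Y + pd true P x Y = 0 /\
     u x Y * pd true v x Y + v x Y * pd false v x Y + pd false P x Y = 0 /\
     pd true u x Y + pd false v x Y = 0) /\
  (forall x, 0 < x < L -> filterlim (fun Y => v x Y) (at_right 0) (locally 0)) /\
  (forall x, 0 < x < L ->
     filterlim (fun Y => v x Y) (Rbar_locally p_infty) (locally 0)).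

(* ||Y^k nabla^m f||_{L^oo(Omega_L)} < oo (f continuous, so sup = ess sup). *)
Definition weighted_deriv_bounded (L : R) (k m : nat) (f : field2) : Prop :=
  exists M : R, forall (ds : list bool) (x Y : R),
    length ds = m -> in_Omega L x Y -> Rabs (Y ^ k * partial ds f x Y) <= M.

(* The flow has complex velocity u - i v = 1 - delta w^-N with w = (x + 1) + iY
   and N = K + 1.  Holomorphy makes it incompressible and irrotational, so it
   solves the Euler equations with the Bernoulli pressure - (u^2 + v^2) / 2, and
   v = delta Im w^-N vanishes on Y = 0 without vanishing identically.  Each
   derivative of order m is a constant multiple of Re or Im of w^-(N+m), and
   |Y^k w^-p| <= 1 for k <= p on x > 0, which gives the weighted bounds; a small
   delta gives the bounds on u and v / Y. *)

From Stdlib Require Import Reals List.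
From Coquelicot Require Import Coquelicot.
From Stdlib Require Import Lra Lia Psatz Classical.
Open Scope R_scope.

(* Rational expressions in a = x + 1, Y and 1 / (a^2 + Y^2); the shift by 1
   keeps the pole (x, Y) = (-1, 0) away from the half-plane x > -1 where all
   computations take place. *)
Inductive expr :=
  | Cst (c : R) | Xs | Yv | InvNorm2
  | Add (e1 e2 : expr) | Mul (e1 e2 : expr).

Definition norm2 (x Y : R) : R := (x + 1) * (x + 1) + Y * Y.

Fixpoint eval (e : expr) (x Y : R) : R :=
  match e with
  | Cst c => c
  | Xs => x + 1
  | Yv => Y
  | InvNorm2 => / norm2 x Y
  | Add e1 e2 => eval e1 x Y + eval e2 x Y
  | Mul e1 e2 => eval e1 x Y * eval e2 x Y
  end.

Fixpoint deriv (d : bool) (e : expr) : expr :=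
  match e with
  | Cst _ => Cst 0
  | Xs => Cst (if d then 1 else 0)
  | Yv => Cst (if d then 0 else 1)
  | InvNorm2 => Mul (Cst (-2)) (Mul (if d then Xs else Yv) (Mul InvNorm2 InvNorm2))
  | Add e1 e2 => Add (deriv d e1) (deriv d e2)
  | Mul e1 e2 => Add (Mul (deriv d e1) e2) (Mul e1 (deriv d e2))
  end.

Fixpoint derivs (ds : list bool) (e : expr) : expr :=
  match ds with
  | nil => e
  | d :: ds' => deriv d (derivs ds' e)
  end.

Lemma norm2_pos x Y : -1 < x -> 0 < norm2 x Y.
Proof. unfold norm2; intros; nra. Qed.

Lemma locally_gt z y : z < y -> locally y (fun t => z < t).
Proof.
  intros Hzy; assert (Hr : 0 < y - z) by lra.
  exists (mkposreal _ Hr); intros t Ht.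
  apply Rabs_lt_between' in Ht; simpl in Ht; lra.
Qed.

Lemma is_derive_eval_x e x Y : -1 < x ->
  is_derive (fun t => eval e t Y) x (eval (deriv true e) x Y).
Proof.
  intros Hx; pose proof (norm2_pos x Y Hx); unfold norm2 in *.
  induction e; simpl; unfold norm2.
  - apply (is_derive_const c x).
  - auto_derive; [easy | ring].
  - apply (is_derive_const Y x).
  - auto_derive; [lra | field; lra].
  - now apply (is_derive_plus (fun t => eval e1 t Y) (fun t => eval e2 t Y)).
  - apply (is_derive_mult (fun t => eval e1 t Y) (fun t => eval e2 t Y)); auto.
    intros; apply Rmult_comm.
Qed.

Lemma is_derive_eval_Y e x Y : -1 < x ->
  is_derive (fun t => eval e x t) Y (eval (deriv false e) x Y).
Proof.
  intros Hx; pose proof (norm2_pos x Y Hx); unfold norm2 in *.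
  induction e; simpl; unfold norm2.
  - apply (is_derive_const c Y).
  - apply (is_derive_const (x + 1) Y).
  - auto_derive; [easy | ring].
  - auto_derive; [lra | field; lra].
  - now apply (is_derive_plus (fun t => eval e1 x t) (fun t => eval e2 x t)).
  - apply (is_derive_mult (fun t => eval e1 x t) (fun t => eval e2 x t)); auto.
    intros; apply Rmult_comm.
Qed.

Lemma pd_eval_ext d (f : field2) e x Y :
  (forall x' Y', -1 < x' -> f x' Y' = eval e x' Y') -> -1 < x ->
  pd d f x Y = eval (deriv d e) x Y.
Proof.
  intros Hf Hx; destruct d; cbn [pd].
  - rewrite (Derive_ext_loc _ (fun t => eval e t Y)).
    + now apply is_derive_unique, is_derive_eval_x.
    + apply (filter_imp (fun t => -1 < t)); [now intros; apply Hf | now apply locally_gt].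
  - rewrite (Derive_ext _ (fun t => eval e x t)) by (intros; now apply Hf).
    now apply is_derive_unique, is_derive_eval_Y.
Qed.

Lemma partial_eval ds e x Y : -1 < x ->
  partial ds (eval e) x Y = eval (derivs ds e) x Y.
Proof.
  revert x Y; induction ds as [|d ds IH]; intros x Y Hx; [reflexivity|].
  now apply pd_eval_ext.
Qed.

Lemma eval_deriv_ext d e1 e2 :
  (forall x Y, -1 < x -> eval e1 x Y = eval e2 x Y) ->
  forall x Y, -1 < x -> eval (deriv d e1) x Y = eval (deriv d e2) x Y.
Proof.
  intros H12 x Y Hx.
  rewrite <- (pd_eval_ext d (eval e1) e1), <- (pd_eval_ext d (eval e1) e2); auto.
Qed.

Lemma continuous_eval e x Y : -1 < x ->
  continuous (fun p : R * R => eval e (fst p) (snd p)) (x, Y).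
Proof.
  intros Hx.
  assert (Hxs : continuous (fun p : R * R => fst p + 1) (x, Y))
    by (apply (continuous_plus (fun p : R * R => fst p) (fun _ => 1));
        [apply continuous_fst | apply continuous_const]).
  induction e; simpl.
  - apply continuous_const.
  - exact Hxs.
  - apply continuous_snd.
  - apply (continuous_comp (fun p : R * R => norm2 (fst p) (snd p)) Rinv).
    + apply (continuous_plus (fun p : R * R => (fst p + 1) * (fst p + 1))
                             (fun p : R * R => snd p * snd p)).
      * now apply (continuous_mult (fun p : R * R => fst p + 1) (fun p : R * R => fst p + 1)).
      * apply (continuous_mult (fun p : R * R => snd p) (fun p : R * R => snd p));
          apply continuous_snd.
    + apply continuous_Rinv, Rgt_not_eq, norm2_pos, Hx.
  - now apply (continuous_plus (fun p : R * R => eval e1 (fst p) (snd p))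
                               (fun p : R * R => eval e2 (fst p) (snd p))).
  - now apply (continuous_mult (fun p : R * R => eval e1 (fst p) (snd p))
                               (fun p : R * R => eval e2 (fst p) (snd p))).
Qed.

Lemma smooth_on_Omega_eval L e : smooth_on_Omega L (eval e).
Proof.
  intros ds x Y [[Hx _] _].
  assert (Hx1 : -1 < x) by lra.
  assert (Hds : forall x' Y', -1 < x' ->
            eval (derivs ds e) x' Y' = partial ds (eval e) x' Y')
    by (intros; symmetry; now apply partial_eval).
  split; [|split].
  - eexists; apply (is_derive_ext_loc (fun t => eval (derivs ds e) t Y));
      [| now apply is_derive_eval_x].
    apply (filter_imp (fun t => -1 < t)); [now intros; apply Hds | now apply locally_gt].
  - eexists; apply (is_derive_ext (fun t => eval (derivs ds e) x t));
      [now intros; apply Hds | now apply is_derive_eval_Y].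
  - apply (continuous_ext_loc _ (fun p : R * R => eval (derivs ds e) (fst p) (snd p)));
      [| now apply continuous_eval].
    apply (filter_imp (fun p : R * R => -1 < fst p)); [now intros; apply Hds |].
    apply (continuous_fst x Y (fun t => -1 < t)), locally_gt, Hx1.
Qed.

(* [ipow true p] and [ipow false p] are the real and imaginary parts of
   w^-p, w = (x + 1) + iY, computed from w^-1 = conj w / norm2. *)
Fixpoint ipow (b : bool) (p : nat) {struct p} : expr :=
  match p with
  | O => Cst (if b then 1 else 0)
  | S p =>
      Mul (if b then Add (Mul Xs (ipow true p)) (Mul Yv (ipow false p))
                else Add (Mul Xs (ipow false p)) (Mul (Cst (-1)) (Mul Yv (ipow true p))))
          InvNorm2
  end.

(* d/dx w^-p = - p w^-(p+1) and d/dY w^-p = - i p w^-(p+1). *)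
Definition ipow_coef (d b : bool) (p : nat) : R :=
  if d then - INR p else if b then INR p else - INR p.

Lemma eval_deriv_ipow d b p x Y : -1 < x ->
  eval (deriv d (ipow b p)) x Y =
  ipow_coef d b p * eval (ipow (if d then b else negb b) (S p)) x Y.
Proof.
  intros Hx; pose proof (norm2_pos x Y Hx) as Hn.
  revert d b; induction p as [|p IH]; intros d b.
  - destruct d, b; simpl; ring.
  - destruct d, b; cbn [deriv ipow eval]; rewrite !IH; cbn [ipow eval negb ipow_coef];
      rewrite !S_INR; unfold norm2 in *; field; lra.
Qed.

Lemma ipow_norm p x Y : -1 < x ->
  eval (ipow true p) x Y ^ 2 + eval (ipow false p) x Y ^ 2 = (/ norm2 x Y) ^ p.
Proof.
  intros Hx; pose proof (norm2_pos x Y Hx) as Hn.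
  induction p as [|p IH]; simpl; [ring|].
  rewrite <- IH; unfold norm2 in *; field; lra.
Qed.

Lemma ipow_weighted_le b p k x Y : 0 < x -> (k <= p)%nat ->
  Rabs (Y ^ k * eval (ipow b p) x Y) <= 1.
Proof.
  intros Hx Hkp.
  pose proof (ipow_norm p x Y ltac:(lra)) as Hnorm.
  assert (Hn : 1 <= norm2 x Y) by (unfold norm2; nra).
  set (t := / norm2 x Y) in Hnorm.
  assert (Ht : 0 < t <= 1)
    by (split; [apply Rinv_0_lt_compat | rewrite <- Rinv_1; apply Rinv_le_contravar]; lra).
  assert (HYt : 0 <= Y ^ 2 * t <= 1).
  { split; [apply Rmult_le_pos; [apply pow2_ge_0 | lra]|].
    unfold t; apply (Rdiv_le_1 (Y ^ 2) (norm2 x Y)); [lra | unfold norm2; nra]. }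
  set (z := eval (ipow b p) x Y).
  assert (Hz : z ^ 2 <= t ^ p)
    by (rewrite <- Hnorm; unfold z; destruct b; pose proof (pow2_ge_0 (eval (ipow true p) x Y));
        pose proof (pow2_ge_0 (eval (ipow false p) x Y)); lra).
  assert (Hpow : forall a n, 0 <= a <= 1 -> 0 <= a ^ n <= 1)
    by (intros a n Ha; split; [apply pow_le; lra | rewrite <- (pow1 n); apply pow_incr; lra]).
  rewrite <- Rabs_R1; apply Rsqr_le_abs_0; unfold Rsqr.
  replace p with (k + (p - k))%nat in Hz by lia.
  rewrite pow_add in Hz.
  destruct (Hpow t (p - k)%nat ltac:(lra)), (Hpow (Y ^ 2 * t) k HYt).
  replace (Y ^ k * z * (Y ^ k * z)) with ((Y ^ 2) ^ k * z ^ 2)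
    by (rewrite <- pow_mult, Nat.mul_comm, pow_mult; ring).
  rewrite Rpow_mult_distr in *.
  assert (0 <= (Y ^ 2) ^ k) by (apply pow_le, pow2_ge_0).
  nra.
Qed.

Lemma ipow_Im_Y0 p x : eval (ipow false p) x 0 = 0.
Proof. induction p as [|p IH]; simpl; [reflexivity|]. rewrite IH; ring. Qed.

Lemma eval_lipschitz_Y e x Y M : -1 < x -> 0 <= Y ->
  (forall t, 0 <= t <= Y -> Rabs (eval (deriv false e) x t) <= M) ->
  Rabs (eval e x Y - eval e x 0) <= M * Y.
Proof.
  intros Hx HY HM.
  destruct (MVT_gen (fun t => eval e x t) 0 Y (eval (deriv false e) x)) as [c [Hc ->]].
  - intros t _; now apply is_derive_eval_Y.
  - intros t _; apply continuity_pt_filterlim, (ex_derive_continuous (fun t => eval e x t)).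
    eexists; now apply is_derive_eval_Y.
  - rewrite Rmin_left, Rmax_right in Hc by lra.
    rewrite Rminus_0_r, Rabs_mult, (Rabs_pos_eq Y) by lra.
    apply Rmult_le_compat_r; [lra | now apply HM].
Qed.

Lemma ipow_Im_le p x Y : 0 < x -> 0 <= Y ->
  Rabs (eval (ipow false p) x Y) <= INR p * Y.
Proof.
  intros Hx HY.
  rewrite <- (Rminus_0_r (eval _ x Y)), <- (ipow_Im_Y0 p x).
  apply eval_lipschitz_Y; [lra | exact HY |].
  intros t _; rewrite eval_deriv_ipow by lra; cbn [ipow_coef negb].
  rewrite Rabs_mult, Rabs_Ropp, (Rabs_pos_eq (INR p)) by apply pos_INR.
  rewrite <- (Rmult_1_r (INR p)) at 2.
  apply Rmult_le_compat_l; [apply pos_INR|].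
  pose proof (ipow_weighted_le true (S p) 0 x t Hx (Nat.le_0_l _)) as H.
  now rewrite pow_O, Rmult_1_l in H.
Qed.

(* If Im w^-p vanished for all Y > 0, so would its Y-derivative - p Re w^-(p+1),
   and at Y = 1 this forces Re w^-p = Im w^-p = 0, against |w^-p| > 0. *)
Lemma ipow_Im_not_identically_zero p x : (1 <= p)%nat -> -1 < x ->
  exists Y, 0 < Y /\ eval (ipow false p) x Y <> 0.
Proof.
  intros Hp Hx.
  destruct (classic (exists Y, 0 < Y /\ eval (ipow false p) x Y <> 0)) as [|Hnone];
    [assumption | exfalso].
  assert (Hzero : forall Y, 0 < Y -> eval (ipow false p) x Y = 0).
  { intros Y HY; apply NNPP; intros HnY; apply Hnone; now exists Y. }
  assert (Hderiv : eval (deriv false (ipow false p)) x 1 = 0).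
  { rewrite <- (pd_eval_ext false (eval (ipow false p)) (ipow false p)) by easy.
    cbn [pd]; rewrite (Derive_ext_loc _ (fun _ => 0)); [apply Derive_const|].
    apply (filter_imp (fun t => 0 < t)); [exact Hzero | apply locally_gt; lra]. }
  rewrite eval_deriv_ipow in Hderiv by exact Hx.
  cbn [ipow_coef negb ipow eval] in Hderiv.
  rewrite (Hzero 1 Rlt_0_1) in Hderiv.
  pose proof (ipow_norm p x 1 Hx) as Hnorm.
  rewrite (Hzero 1 Rlt_0_1) in Hnorm.
  pose proof (norm2_pos x 1 Hx) as Hn.
  assert (HpR : 0 < INR p) by (apply lt_0_INR; lia).
  assert (Hre : eval (ipow true p) x 1 = 0).
  { apply Rmult_integral in Hderiv as [Hc | Hc]; [lra|].
    apply Rmult_integral in Hc as [Hc | Hc]; [| pose proof (Rinv_0_lt_compat _ Hn); lra].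
    apply (Rmult_eq_reg_l (x + 1)); lra. }
  rewrite Hre in Hnorm.
  pose proof (pow_lt (/ norm2 x 1) p (Rinv_0_lt_compat _ Hn)).
  simpl in Hnorm; lra.
Qed.

Lemma Rabs_ipow_coef d b p : Rabs (ipow_coef d b p) = INR p.
Proof.
  pose proof (pos_INR p).
  destruct d, b; unfold ipow_coef; rewrite ?Rabs_Ropp; now apply Rabs_pos_eq.
Qed.

Lemma eval_derivs_ipow ds b p : exists c b',
  Rabs c <= INR (p + length ds) ^ length ds /\
  forall x Y, -1 < x ->
    eval (derivs ds (ipow b p)) x Y = c * eval (ipow b' (p + length ds)) x Y.
Proof.
  induction ds as [|d ds [c [b' [Hc IH]]]].
  - exists 1, b; simpl; rewrite Nat.add_0_r, Rabs_R1; split; [lra | intros; ring].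
  - set (q := (p + length ds)%nat) in *.
    exists (c * ipow_coef d b' q), (if d then b' else negb b').
    cbn [length]; rewrite Nat.add_succ_r; fold q.
    split.
    + rewrite Rabs_mult, Rabs_ipow_coef, S_INR; cbn [pow].
      pose proof (pos_INR q); pose proof (Rabs_pos c).
      assert (INR q ^ length ds <= (INR q + 1) ^ length ds) by (apply pow_incr; lra).
      nra.
    + intros x Y Hx; cbn [derivs].
      rewrite (eval_deriv_ext d _ (Mul (Cst c) (ipow b' q))) by easy.
      cbn [deriv eval]; rewrite eval_deriv_ipow by exact Hx; ring.
Qed.

Definition affine (c1 c0 : R) (e : expr) : expr := Add (Cst c1) (Mul (Cst c0) e).

Lemma eval_derivs_affine ds c1 c0 e x Y : -1 < x ->
  eval (derivs ds (affine c1 c0 e)) x Y =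
  match ds with nil => c1 | _ => 0 end + c0 * eval (derivs ds e) x Y.
Proof.
  revert x Y; induction ds as [|d ds IH]; intros x Y Hx; [reflexivity|].
  cbn [derivs]; rewrite (eval_deriv_ext d _ (affine (match ds with nil => c1 | _ => 0 end) c0 (derivs ds e)))
    by first [exact Hx | intros; now apply IH].
  cbn [affine deriv eval]; ring.
Qed.

Lemma weighted_deriv_bounded_affine_ipow L k m c1 c0 b p :
  (k <= p)%nat -> c1 = 0 \/ (1 <= m)%nat ->
  weighted_deriv_bounded L k m (eval (affine c1 c0 (ipow b p))).
Proof.
  intros Hkp Hc1; exists (Rabs c0 * INR (p + m) ^ m).
  intros ds x Y <- [[Hx _] _].
  destruct (eval_derivs_ipow ds b p) as [c [b' [Hc Hds]]].
  rewrite partial_eval, eval_derivs_affine, Hds by lra.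
  replace (match ds with nil => c1 | _ => 0 end) with 0
    by (destruct ds; [destruct Hc1; [easy | simpl in *; lia] | reflexivity]).
  replace (Y ^ k * (0 + c0 * (c * eval (ipow b' (p + length ds)) x Y)))
    with (c0 * c * (Y ^ k * eval (ipow b' (p + length ds)) x Y)) by ring.
  rewrite (Rabs_mult (c0 * c)), Rabs_mult, <- (Rmult_1_r (_ * INR _ ^ _)).
  apply Rmult_le_compat; [apply Rmult_le_pos; apply Rabs_pos | apply Rabs_pos | |].
  - apply Rmult_le_compat_l; [apply Rabs_pos | exact Hc].
  - apply ipow_weighted_le; [exact Hx | lia].
Qed.

Lemma filterlim_0_squeeze {T} (F : (T -> Prop) -> Prop) {FF : Filter F} (f g : T -> R) :
  F (fun t => Rabs (f t) <= g t) -> filterlim g F (locally 0) ->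
  filterlim f F (locally 0).
Proof.
  intros Hfg Hg.
  apply (filterlim_le_le (fun t => - g t) f g 0); [| | exact Hg].
  - apply (filter_imp _ _ (fun t => proj1 (Rabs_le_between (f t) (g t)))), Hfg.
  - eapply filterlim_comp; [exact Hg|].
    rewrite <- Ropp_0 at 2; apply (filterlim_opp (V := R_NormedModule)).
Qed.

Lemma filterlim_linear_at_right_0 C :
  filterlim (fun Y => C * Y) (at_right 0) (locally 0).
Proof.
  apply (filterlim_filter_le_1 (F := locally 0)); [apply filter_le_within |].
  rewrite <- (Rmult_0_r C) at 2.
  apply (continuous_mult (fun _ => C) (fun Y : R => Y)); [apply continuous_const | apply continuous_id].
Qed.

Lemma filterlim_inverse_at_infty C :
  filterlim (fun Y => C / Y) (Rbar_locally p_infty) (locally 0).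
Proof.
  assert (H := is_lim_scal_l _ C _ _ (is_lim_inv _ _ _ (is_lim_id p_infty) ltac:(discriminate))).
  simpl in H; rewrite Rmult_0_r in H; exact H.
Qed.

Definition flow_u (delta : R) (N : nat) : expr := affine 1 (- delta) (ipow true N).
Definition flow_v (delta : R) (N : nat) : expr := affine 0 delta (ipow false N).
Definition flow_P (delta : R) (N : nat) : expr :=
  Mul (Cst (-1/2)) (Add (Mul (flow_u delta N) (flow_u delta N))
                        (Mul (flow_v delta N) (flow_v delta N))).

Lemma flow_Euler_equations delta N x Y : -1 < x ->
  let u := eval (flow_u delta N) in
  let v := eval (flow_v delta N) in
  let P := eval (flow_P delta N) in
  u x Y * pd true u x Y + v x Y * pd false u x Y + pd true P x Y = 0 /\
  u x Y * pd true v x Y + v x Y * pd false v x Y + pd false P x Y = 0 /\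
  pd true u x Y + pd false v x Y = 0.
Proof.
  intros Hx u v P; unfold u, v, P.
  rewrite !(pd_eval_ext _ _ _ x Y (fun _ _ _ => eq_refl)) by exact Hx.
  unfold flow_P, flow_u, flow_v, affine; cbn [deriv eval].
  rewrite !eval_deriv_ipow by exact Hx; cbn [ipow_coef negb].
  repeat split; field.
Qed.

Lemma flow_v_le_linear delta N x Y : 0 < x -> 0 <= Y ->
  Rabs (eval (flow_v delta N) x Y) <= Rabs delta * INR N * Y.
Proof.
  intros Hx HY; cbn [flow_v affine eval].
  rewrite Rplus_0_l, Rabs_mult, Rmult_assoc.
  apply Rmult_le_compat_l; [apply Rabs_pos | now apply ipow_Im_le].
Qed.

Lemma flow_v_le_inverse delta N x Y : 0 < x -> (1 <= N)%nat ->
  Rabs (Y * eval (flow_v delta N) x Y) <= Rabs delta.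
Proof.
  intros Hx HN; cbn [flow_v affine eval].
  replace (Y * (0 + delta * eval (ipow false N) x Y))
    with (delta * (Y ^ 1 * eval (ipow false N) x Y)) by ring.
  rewrite Rabs_mult; rewrite <- (Rmult_1_r (Rabs delta)) at 2.
  apply Rmult_le_compat_l; [apply Rabs_pos | now apply ipow_weighted_le].
Qed.

Lemma flow_steady_Euler L delta N : (1 <= N)%nat ->
  steady_Euler_flow L (eval (flow_u delta N)) (eval (flow_v delta N)) (eval (flow_P delta N)).
Proof.
  intros HN.
  split; [apply smooth_on_Omega_eval|]; split; [apply smooth_on_Omega_eval|];
    split; [apply smooth_on_Omega_eval|].
  split; [intros x Y [[Hx _] _]; apply flow_Euler_equations; lra|].
  split; intros x [Hx _].
  - apply (filterlim_0_squeeze _ _ (fun Y => Rabs delta * INR N * Y));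
      [| apply filterlim_linear_at_right_0].
    exists posreal_one; intros Y _ HY; apply flow_v_le_linear; lra.
  - apply (filterlim_0_squeeze _ _ (fun Y => Rabs delta / Y));
      [| apply filterlim_inverse_at_infty].
    exists 0; intros Y HY.
    pose proof (flow_v_le_inverse delta N x Y Hx HN) as Hv.
    rewrite Rabs_mult, (Rabs_pos_eq Y) in Hv by lra.
    apply Rle_div_r; lra.
Qed.

Lemma flow_u_bounds delta N x Y : 0 < x ->
  1 - Rabs delta <= eval (flow_u delta N) x Y <= 1 + Rabs delta.
Proof.
  intros Hx; cbn [flow_u affine eval].
  pose proof (ipow_weighted_le true N 0 x Y Hx (Nat.le_0_l _)) as H.
  rewrite pow_O, Rmult_1_l in H.
  assert (Hbound : Rabs (- delta * eval (ipow true N) x Y) <= Rabs delta).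
  { rewrite Rabs_mult, Rabs_Ropp; rewrite <- (Rmult_1_r (Rabs delta)) at 2.
    apply Rmult_le_compat_l; [apply Rabs_pos | exact H]. }
  apply Rabs_le_between in Hbound; lra.
Qed.

Lemma flow_v_div_Y_le delta N x Y : 0 < x -> 0 < Y ->
  Rabs (eval (flow_v delta N) x Y / Y) <= Rabs delta * INR N.
Proof.
  intros Hx HY.
  rewrite Rabs_div, (Rabs_pos_eq Y) by lra.
  apply Rle_div_l; [exact HY|].
  apply flow_v_le_linear; lra.
Qed.

Lemma flow_v_not_identically_zero delta N x : delta <> 0 -> (1 <= N)%nat -> -1 < x ->
  exists Y, 0 < Y /\ eval (flow_v delta N) x Y <> 0.
Proof.
  intros Hd HN Hx.
  destruct (ipow_Im_not_identically_zero N x HN Hx) as [Y [HY HIm]].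
  exists Y; split; [exact HY|].
  cbn [flow_v affine eval]; rewrite Rplus_0_l.
  now apply Rmult_integral_contrapositive_currified.
Qed.

Lemma small_amplitude eta n : 0 < eta -> 1 <= n ->
  exists delta, 0 < delta < 1 /\ delta * n <= eta.
Proof.
  intros Heta Hn; exists (eta / ((1 + eta) * n)).
  assert (Hdn : eta / ((1 + eta) * n) * n = eta / (1 + eta)) by (field; lra).
  assert (eta / (1 + eta) < 1) by (apply (Rdiv_lt_1 eta (1 + eta)); lra).
  assert (eta / (1 + eta) <= eta) by (apply (Rle_div_l eta eta (1 + eta)); nra).
  assert (0 < eta / ((1 + eta) * n)) by (apply Rdiv_lt_0_compat; nra).
  nra.
Qed.

Theorem propositionA1 :
  forall (eta : R) (K : nat), 0 < eta -> (1 <= K)%nat ->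
  exists L0 : R, 0 < L0 /\
  forall L : R, 0 < L <= L0 ->
  exists u v P : field2,
    steady_Euler_flow L u v P /\
    (exists x Y, in_Omega L x Y /\ v x Y <> 0) /\
    (exists c0 C0 : R, 0 < c0 /\
       forall x Y, in_Omega L x Y -> c0 <= u x Y <= C0) /\
    (forall x Y, in_Omega L x Y -> Rabs (v x Y / Y) <= eta) /\
    (forall k m : nat, (k <= K)%nat -> (m <= K)%nat ->
       weighted_deriv_bounded L k m v) /\
    (forall k m : nat, (k <= K)%nat -> (1 <= m <= K)%nat ->
       weighted_deriv_bounded L k m u).
Proof.
  intros eta K Heta HK.
  exists 1; split; [lra|]; intros L [HL _].
  set (N := S K).
  assert (HN : 1 <= INR N) by (apply (le_INR 1); lia).
  destruct (small_amplitude eta (INR N) Heta HN) as [delta [[Hd0 Hd1] HdN]].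
  exists (eval (flow_u delta N)), (eval (flow_v delta N)), (eval (flow_P delta N)).
  rewrite <- (Rabs_pos_eq delta) in Hd1, HdN by lra.
  split; [|split; [|split; [|split; [|split]]]].
  - apply flow_steady_Euler; lia.
  - destruct (flow_v_not_identically_zero delta N (L / 2)) as [Y [HY Hv]]; [lra | lia | lra |].
    exists (L / 2), Y; split; [repeat split; lra | exact Hv].
  - exists (1 - Rabs delta), (1 + Rabs delta); split; [lra|].
    intros x Y [[Hx _] _]; now apply flow_u_bounds.
  - intros x Y [[Hx _] HY].
    exact (Rle_trans _ _ _ (flow_v_div_Y_le delta N x Y Hx HY) HdN).
  - intros k m Hk _; apply weighted_deriv_bounded_affine_ipow; [lia | now left].
  - intros k m Hk Hm; apply weighted_deriv_bounded_affine_ipow; [lia | right; lia].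
Qed.
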